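(* Let $\Phi\colon\mathcal{X}\to\mathcal{X}$ be an involution, $\Pi$ a closed convex family of conditional distributions $\pi\colon\mathcal{X}\to\Delta(\mathcal{Y})$, $F$ a Legendre function, and $\pi^*\in\mathcal{C}_{\mathrm{coh}}\cap\Pi$. Let $\overline\pi\in\arg\min_{\pi\in\mathcal{C}^\dagger_{\mathrm{coh}}}\mathsf{B}(\pi\parallel\pi_0)$ and $\widehat{\widehat\pi}\in\arg\min_{\pi\in\mathcal{C}_{\mathrm{coh}}\cap\Pi}\mathsf{B}(\pi\parallel\overline\pi)$. Then, with $\mathbb{E}=\mathbb{E}_{x\sim\mathcal{D}_{\mathcal{X}}}$, $$\mathbb{E}[\mathsf{B}_F(\pi^*(x)\parallel\widehat{\widehat\pi}(x))]\le\mathbb{E}[\mathsf{B}_F(\pi^*(x)\parallel\pi_0(x))]-\Big(\mathbb{E}[\mathsf{B}_F(\widehat{\widehat\pi}(x)\parallel\overline\pi(x))]+\mathbb{E}[\mathsf{B}_F(\overline\pi(x)\parallel\pi_0(x))]\Big).$$ Furthermore, $$\mathbb{E}[\mathsf{B}_F(\pi^*(x)\parallel\widehat{\widehat\pi}(x))]\le\mathbb{E}[\mathsf{B}_F(\pi^*(x)\parallel\pi_0(x))]-\Big(\mathbb{E}[\mathsf{B}_F(\widehat{\widehat\pi}(x)\parallel\overline\pi(x))]+\delta\Big),$$ where $\delta=\mathbb{E}\big[\lambda(x)F^*(u_0)+(1-\lambda(x))F^*(u_1)-F^*(\lambda(x)u_0+(1-\lambda(x))u_1)\big]\ge0$, with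 $\lambda(x)=\frac{\mathbb{P}(x)}{\mathbb{P}(x)+\mathbb{P}(\Phi(x))}$, $u_0=\nabla F(\pi_0(x))$, $u_1=\nabla F(\pi_0(\Phi(x)))$.
   Context: $\mathcal{X},\mathcal{Y}$ finite, $d=|\mathcal{Y}|$; $\Pi_{\mathrm{all}}=\Delta(\mathcal{Y})^{\mathcal{X}}$; $\pi_0\in\Pi_{\mathrm{all}}$ baseline; $\mathcal{D}_{\mathcal{X}}$ full-support distribution on $\mathcal{X}$, $\mathbb{P}(x)=\mathcal{D}_{\mathcal{X}}(x)$. $F$ has a closed convex domain $\mathcal{K}\supseteq\mathbb{R}^d_{\ge0}$ with $\mathrm{int}(\mathcal{K})\supseteq\mathbb{R}^d_{++}$; $F^*$ is its Fenchel conjugate; $\mathsf{B}_F(p\parallel q)=F(p)-F(q)-\langle\nabla F(q),p-q\rangle$ and $\mathsf{B}(\pi\parallel\pi')=\mathbb{E}[\mathsf{B}_F(\pi(x)\parallel\pi'(x))]$. $\Pi^\dagger_{\mathrm{all}}=(\mathbb{R}^d_+)^{\mathcal{X}}$; $\mathcal{C}^{\dagger}_{\mathrm{coh}}=\{\pi\in\Pi^\dagger_{\mathrm{all}}:\pi(x)=\pi(\Phi(x))\ \forall x\}$; $\mathcal{C}_{\mathrm{coh}}=\mathcal{C}^\dagger_{\mathrm{coh}}\cap\Pi_{\mathrm{all}}$. A Legendre function is proper, closed, convex, differentiable on the interior $\Omega$ of its domain, with $\nabla F\colon\Omega\to\mathrm{int}(\mathrm{dom}F^* )$ a bijection. *)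

From HB Require Import structures.
From mathcomp Require Import all_boot all_order all_algebra.
From mathcomp Require Import all_classical all_reals all_analysis.
Set Implicit Arguments. Unset Strict Implicit. Unset Printing Implicit Defensive.
Import Order.TTheory GRing.Theory Num.Theory.
Import numFieldNormedType.Exports.
Local Open Scope classical_set_scope.
Local Open Scope ring_scope.

Section Defs.
Variables (R : realType) (Y : finType).

(* vectors of R^d, d = |Y|, are functions Y -> R *)
Definition dotp (u p : Y -> R) : R := \sum_(y : Y) u y * p y.

Definition nonneg (p : Y -> R) : Prop := forall y, 0 <= p y.
Definition strictpos (p : Y -> R) : Prop := forall y, 0 < p y.
Definition in_simplex (p : Y -> R) : Prop := nonneg p /\ \sum_(y : Y) p y = 1.

(* interior of a set of R^d (all norms on R^d are equivalent; sup norm) *)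
Definition interior_of (A : set (Y -> R)) (q : Y -> R) : Prop :=
  exists2 e : R, 0 < e & forall p, (forall y, `|p y - q y| < e) -> A p.

Definition closed_vset (A : set (Y -> R)) : Prop :=
  forall (u : nat -> Y -> R) (q : Y -> R), (forall n, A (u n)) ->
    (forall y, (fun n => u n y) @ \oo --> q y) -> A q.

Definition convex_vset (A : set (Y -> R)) : Prop :=
  forall p q (t : R), A p -> A q -> 0 <= t <= 1 ->
    A (fun y => t * p y + (1 - t) * q y).

(* F : R^d -> R with domain K (F = +oo outside K) *)
Definition convex_on (K : set (Y -> R)) (F : (Y -> R) -> R) : Prop :=
  forall p q (t : R), K p -> K q -> 0 <= t <= 1 ->
    F (fun y => t * p y + (1 - t) * q y) <= t * F p + (1 - t) * F q.

Definition closed_fun (K : set (Y -> R)) (F : (Y -> R) -> R) : Prop :=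
  forall (u : nat -> Y -> R) (s : nat -> R) (q : Y -> R) (t : R),
    (forall n, K (u n) /\ F (u n) <= s n) ->
    (forall y, (fun n => u n y) @ \oo --> q y) -> s @ \oo --> t ->
    K q /\ F q <= t.

Definition has_gradient (F : (Y -> R) -> R) (q g : Y -> R) : Prop :=
  forall e : R, 0 < e -> exists2 eta : R, 0 < eta & forall h : Y -> R,
    (forall y, `|h y| < eta) ->
    `|F (fun y => q y + h y) - F q - dotp g h| <= e * \sum_(y : Y) `|h y|.

Definition fconj (K : set (Y -> R)) (F : (Y -> R) -> R) (u : Y -> R) : \bar R :=
  ereal_sup [set ((dotp u p - F p)%:E) | p in K].

Definition dom_fconj (K : set (Y -> R)) (F : (Y -> R) -> R) : set (Y -> R) :=
  [set u | (fconj K F u < +oo)%E].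

Definition legendre (K : set (Y -> R)) (F : (Y -> R) -> R)
    (gradF : (Y -> R) -> (Y -> R)) : Prop :=
  [/\ (exists p, K p) /\
      closed_fun K F,
      convex_vset K /\ convex_on K F,
      (forall q, interior_of K q -> has_gradient F q (gradF q)) /\
      (forall q, interior_of K q -> interior_of (dom_fconj K F) (gradF q)),
      (forall q1 q2, interior_of K q1 -> interior_of K q2 ->
          gradF q1 = gradF q2 -> q1 = q2)
    & (forall u, interior_of (dom_fconj K F) u ->
          exists2 q, interior_of K q & gradF q = u)].

Definition bregF (F : (Y -> R) -> R) (gradF : (Y -> R) -> (Y -> R))
    (p q : Y -> R) : R :=
  F p - F q - dotp (gradF q) (fun y => p y - q y).

Variable X : finType.

Definition expect (P : X -> R) (f : X -> R) : R := \sum_(x : X) P x * f x.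

Definition bregP (P : X -> R) (F : (Y -> R) -> R) (gradF : (Y -> R) -> (Y -> R))
    (pi pi' : X -> Y -> R) : R :=
  expect P (fun x => bregF F gradF (pi x) (pi' x)).

Definition Pi_all : set (X -> Y -> R) := [set pi | forall x, in_simplex (pi x)].
Definition Pi_dag_all : set (X -> Y -> R) := [set pi | forall x, nonneg (pi x)].

Definition C_coh_dag (Phi : X -> X) : set (X -> Y -> R) :=
  [set pi | Pi_dag_all pi /\ forall x, pi x = pi (Phi x)].
Definition C_coh (Phi : X -> X) : set (X -> Y -> R) := C_coh_dag Phi `&` Pi_all.

Definition closed_family (Pi : set (X -> Y -> R)) : Prop :=
  forall (u : nat -> X -> Y -> R) (pi : X -> Y -> R), (forall n, Pi (u n)) ->
    (forall x y, (fun n => u n x y) @ \oo --> pi x y) -> Pi pi.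

Definition convex_family (Pi : set (X -> Y -> R)) : Prop :=
  forall pi pi' (t : R), Pi pi -> Pi pi' -> 0 <= t <= 1 ->
    Pi (fun x y => t * pi x y + (1 - t) * pi' x y).

End Defs.

Definition is_argmin (T : Type) (R : realType) (S : set T) (f : T -> R) (t : T) : Prop :=
  S t /\ forall s, S s -> f t <= f s.

From HB Require Import structures.
From mathcomp Require Import all_boot all_order all_algebra.
From mathcomp Require Import all_classical all_reals all_analysis.
From mathcomp Require Import ring lra.
Import Order.TTheory GRing.Theory Num.Theory.
Import numFieldNormedType.Exports.
Local Open Scope classical_set_scope.
Local Open Scope ring_scope.

(* Both bounds rest on the three-point identity
     B(p||r) = B(p||q) + B(q||r) + E[<gradF q - gradF r, p - q>],
   whose cross term is nonnegative when q minimises B(.||r) over a convex set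
   containing p: it is the one-sided derivative of B(.||r) at q towards p.
   Applying this to pibar (with r = pi0) and to pihh (with r = pibar), pistar
   lying in both constraint sets, gives the first inequality.
   For the second it suffices that 0 <= delta <= B(pibar||pi0). At a gradient
   point F*(gradF p) = <gradF p, p> - F p, so F* of the mixed gradient is at
   most the mixture of these values (delta >= 0) and, by Fenchel-Young at
   pibar(x), at least <mixed gradient, pibar x> - F(pibar x). Since
   (1 - lam x) P x = lam (Phi x) P (Phi x), reindexing by the involution Phi
   turns the expected mixture into a plain expectation, and coherence of pibar
   then yields delta <= B(pibar||pi0). *)

Lemma ler_addgt0_mulr (R : realFieldType) (a b c : R) :
  0 <= c -> (forall e, 0 < e -> a <= b + e * c) -> a <= b.
Proof.
move=> c0 H; apply/ler_addgt0Pr => e e0.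
have c1 : 0 < c + 1 by lra.
apply: (le_trans (H (e / (c + 1)) (divr_gt0 e0 c1))); rewrite lerD2l.
by rewrite mulrAC ler_pdivrMr // ler_wpM2l //; [exact: ltW | lra].
Qed.

Lemma fine_between (R : realDomainType) (x : \bar R) (a b : R) :
  (a%:E <= x)%E -> (x <= b%:E)%E -> a <= fine x <= b.
Proof. by case: x => [r | |] //=; rewrite !lee_fin => -> ->. Qed.

Lemma near_right0_exists {R : realFieldType} {Q : R -> Prop} :
  (\forall t \near 0^'+, Q t) -> exists t, [/\ 0 < t, t <= 1 & Q t].
Proof.
move=> Q_near; apply: (@filter_ex _ (0^'+)); near=> t; split; near: t => //.
- exact: nbhs_right_gt.
- exact/nbhs_right_le/ltr01.
Unshelve. all: by end_near.
Qed.

Section Dotp.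
Context {R : realType} {Y : finType}.
Implicit Types (u v h p q : Y -> R) (t : R).

Lemma dotpBr u p q : dotp u (fun y => p y - q y) = dotp u p - dotp u q.
Proof. by rewrite /dotp -sumrB; apply: eq_bigr => y _; rewrite mulrBr. Qed.

Lemma dotpZr u h t : dotp u (fun y => t * h y) = t * dotp u h.
Proof. by rewrite /dotp mulr_sumr; apply: eq_bigr => y _; ring. Qed.

Lemma dotp_combl u v p (a b : R) :
  dotp (fun y => a * u y + b * v y) p = a * dotp u p + b * dotp v p.
Proof.
by rewrite /dotp !mulr_sumr -big_split; apply: eq_bigr => y _ /=; ring.
Qed.

End Dotp.

Section Gradient.
Context {R : realType} {Y : finType} {F : (Y -> R) -> R}.

Lemma has_gradient_segment {q g : Y -> R} (p : Y -> R) {e : R} :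
  has_gradient F q g -> 0 < e ->
  \forall t \near 0^'+,
    `|F (fun y => t * p y + (1 - t) * q y) - F q
      - t * dotp g (fun y => p y - q y)| <= t * e * \sum_(y : Y) `|p y - q y|.
Proof.
move=> F_grad e0; have [eta eta0 Heta] := F_grad _ e0.
set h := fun y => p y - q y; set S := \sum_(y : Y) `|h y|.
have S1 : 0 < S + 1 by rewrite ltr_wpDl ?sumr_ge0.
near=> t.
have t0 : 0 < t by near: t; exact: nbhs_right_gt.
have tS : t * (S + 1) < eta.
  by rewrite -ltr_pdivlMr //; near: t; apply: nbhs_right_lt; exact: divr_gt0.
have -> : (fun y => t * p y + (1 - t) * q y) = (fun y => q y + t * h y).
  by apply: funext => y; rewrite /h; ring.
have th_small y : `|t * h y| < eta.
  rewrite normrM gtr0_norm //; apply: le_lt_trans tS.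
  rewrite ler_pM2l // /S (bigD1 y) //= -addrA lerDl.
  by rewrite addr_ge0 ?sumr_ge0.
have := Heta _ th_small; rewrite dotpZr.
suff -> : \sum_y `|t * h y| = t * S by rewrite mulrA [e * t]mulrC.
by rewrite /S mulr_sumr; apply: eq_bigr => y _; rewrite normrM gtr0_norm.
Unshelve. all: by end_near.
Qed.

Lemma convex_gradient_le {K : set (Y -> R)} {q g : Y -> R} (p : Y -> R) :
  convex_on K F -> K q -> K p -> has_gradient F q g ->
  F q + dotp g (fun y => p y - q y) <= F p.
Proof.
move=> F_cvx Kq Kp F_grad; rewrite -lerBrDl.
apply: (@ler_addgt0_mulr _ _ _ (\sum_(y : Y) `|p y - q y|)) => [|e e0].
  by rewrite sumr_ge0.
have [t [t0 t1]] := near_right0_exists (has_gradient_segment p F_grad e0).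
have := F_cvx p q t Kp Kq; rewrite ltW //= t1 => /(_ isT) cvx.
rewrite ler_norml => /andP[lower _]; rewrite -(ler_pM2l t0); nra.
Qed.

End Gradient.

Section Families.
Context {R : realType} {X Y : finType}.
Implicit Types (C D : set (X -> Y -> R)) (Phi : X -> X).

Lemma convex_familyI {C D} :
  convex_family C -> convex_family D -> convex_family (C `&` D).
Proof.
by move=> cC cD p q t [Cp Dp] [Cq Dq] t01; split; [exact: cC | exact: cD].
Qed.

Lemma convex_family_Pi_all : convex_family (@Pi_all R Y X).
Proof.
move=> p q t p1 q1 /andP[t0 t1] x; split => [y|].
  rewrite addr_ge0 // mulr_ge0 ?subr_ge0 //.
  - exact: (p1 x).1.
  - exact: (q1 x).1.
by rewrite big_split /= -!mulr_sumr (p1 x).2 (q1 x).2 !mulr1 subrKC.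
Qed.

Lemma convex_family_C_coh_dag Phi : convex_family (@C_coh_dag R Y X Phi).
Proof.
move=> p q t [p0 pPhi] [q0 qPhi] /andP[t0 t1]; split => [x y|x].
  by rewrite addr_ge0 // mulr_ge0 ?subr_ge0 //; [exact: p0 | exact: q0].
by rewrite (pPhi x) (qPhi x).
Qed.

Lemma convex_family_C_coh Phi : convex_family (@C_coh R Y X Phi).
Proof.
exact: convex_familyI (convex_family_C_coh_dag Phi) convex_family_Pi_all.
Qed.

End Families.

Section Expectation.
Context {R : realType} {X : finType} {P : X -> R}.
Implicit Types f g : X -> R.

Lemma expectB f g : expect P f - expect P g = expect P (fun x => f x - g x).
Proof. by rewrite /expect -sumrB; apply: eq_bigr => x _; rewrite mulrBr. Qed.

Hypothesis P_ge0 : forall x, 0 <= P x.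

Lemma expect_ge0 f : (forall x, 0 <= f x) -> 0 <= expect P f.
Proof. by move=> f0; apply: sumr_ge0 => x _; rewrite mulr_ge0. Qed.

Lemma ler_expect f g : (forall x, f x <= g x) -> expect P f <= expect P g.
Proof. by move=> fg; apply: ler_sum => x _; rewrite ler_wpM2l. Qed.

End Expectation.

Section Bregman.
Context {R : realType} {X Y : finType} {P : X -> R}.
Context {F : (Y -> R) -> R} {gradF : (Y -> R) -> Y -> R}.
Local Notation bregP := (bregP P F gradF).

Definition bregP_cross (p q r : X -> Y -> R) : R :=
  expect P (fun x => dotp (gradF (q x)) (fun y => p x y - q x y)
                   - dotp (gradF (r x)) (fun y => p x y - q x y)).

Lemma bregP_three_point p q r :
  bregP p r = bregP p q + bregP q r + bregP_cross p q r.
Proof.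
rewrite /bregP /bregP_cross /expect -!big_split /=; apply: eq_bigr => x _.
by rewrite /bregF !dotpBr; ring.
Qed.

Lemma bregF_subl (a b c : Y -> R) :
  bregF F gradF a c - bregF F gradF b c =
  F a - F b - dotp (gradF c) (fun y => a y - b y).
Proof. by rewrite /bregF !dotpBr; ring. Qed.

Hypothesis P_ge0 : forall x, 0 <= P x.

Lemma bregP_cross_argmin_ge0 {C : set (X -> Y -> R)} {q pb pi : X -> Y -> R} :
  convex_family C -> C pi ->
  (forall x, has_gradient F (pb x) (gradF (pb x))) ->
  is_argmin C (fun s => bregP s q) pb -> 0 <= bregP_cross pi pb q.
Proof.
move=> C_cvx Cpi pb_grad [Cpb pb_min].
set h := fun x y => pi x y - pb x y; set S := fun x => \sum_(y : Y) `|h x y|.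
apply: (@ler_addgt0_mulr _ _ _ (expect P S)) => [|e e0].
  by apply: expect_ge0 => // x; rewrite sumr_ge0.
have [t [t0 t1 Ht]] := near_right0_exists
  (filter_forall _ (fun x => has_gradient_segment (pi x) (pb_grad x) e0)).
have := pb_min _ (C_cvx _ _ t Cpi Cpb _); rewrite ltW //= t1 => /(_ isT).
rewrite -subr_ge0 expectB => gap.
rewrite -(pmulr_rge0 _ t0); apply: le_trans gap _.
have -> : t * (bregP_cross pi pb q + e * expect P S) =
    expect P (fun x =>
      t * (dotp (gradF (pb x)) (h x) - dotp (gradF (q x)) (h x)) + t * e * S x).
  rewrite /bregP_cross /expect mulrDr !mulr_sumr -big_split.
  by apply: eq_bigr => x _ /=; ring.
apply: ler_expect => // x; rewrite bregF_subl.
have -> : (fun y => t * pi x y + (1 - t) * pb x y - pb x y) =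
          (fun y => t * h x y) by apply: funext => y; rewrite /h; ring.
move: (Ht x); rewrite -/(h x) -/(S x) dotpZr mulrBr ler_norml.
by move=> /andP[_]; lra.
Qed.

Lemma bregP_pythagoras {C : set (X -> Y -> R)} {q pb pi : X -> Y -> R} :
  convex_family C -> C pi ->
  (forall x, has_gradient F (pb x) (gradF (pb x))) ->
  is_argmin C (fun s => bregP s q) pb -> bregP pi pb + bregP pb q <= bregP pi q.
Proof.
move=> C_cvx Cpi pb_grad pb_min.
rewrite (bregP_three_point pi pb q) lerDl; exact: bregP_cross_argmin_ge0 pb_min.
Qed.

End Bregman.

Definition fconj_gap {R : realType} {Y : finType} (K : set (Y -> R))
    (F : (Y -> R) -> R) (t : R) (u v : Y -> R) : R :=
  t * fine (fconj K F u) + (1 - t) * fine (fconj K F v)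
  - fine (fconj K F (fun y => t * u y + (1 - t) * v y)).

Section Conjugate.
Context {R : realType} {Y : finType} {K : set (Y -> R)} {F : (Y -> R) -> R}.

Lemma fenchel_young (u : Y -> R) {p : Y -> R} :
  K p -> ((dotp u p - F p)%:E <= fconj K F u)%E.
Proof. by move=> Kp; apply: ereal_sup_ubound; exists p. Qed.

Lemma fconj_gradient {q g : Y -> R} :
  convex_on K F -> K q -> has_gradient F q g ->
  fconj K F g = (dotp g q - F q)%:E.
Proof.
move=> F_cvx Kq F_grad; apply/eqP; rewrite eq_le fenchel_young // andbT.
apply: ub_ereal_sup => _ [p Kp <-]; rewrite lee_fin.
by have := convex_gradient_le p F_cvx Kq Kp F_grad; rewrite dotpBr; lra.
Qed.

Lemma fconj_mix_le (t a b : R) (u v : Y -> R) : 0 <= t <= 1 ->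
  (fconj K F u <= a%:E)%E -> (fconj K F v <= b%:E)%E ->
  (fconj K F (fun y => (t * u y + (1 - t) * v y)%R)
     <= (t * a + (1 - t) * b)%:E)%E.
Proof.
move=> /andP[t0 t1] ua vb; apply: ub_ereal_sup => _ [p Kp <-].
have := le_trans (fenchel_young u Kp) ua.
have := le_trans (fenchel_young v Kp) vb.
rewrite !lee_fin dotp_combl => pv pu.
have -> : t * dotp u p + (1 - t) * dotp v p - F p =
          t * (dotp u p - F p) + (1 - t) * (dotp v p - F p) by ring.
by rewrite lerD // ler_wpM2l // subr_ge0.
Qed.

Context {gradF : (Y -> R) -> Y -> R} {t : R} {p0 p1 : Y -> R}.
Hypotheses (F_cvx : convex_on K F) (t01 : 0 <= t <= 1).
Hypotheses (Kp0 : K p0) (Kp1 : K p1).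
Hypotheses (p0_grad : has_gradient F p0 (gradF p0)).
Hypotheses (p1_grad : has_gradient F p1 (gradF p1)).

Let fconj_p0 := fconj_gradient F_cvx Kp0 p0_grad.
Let fconj_p1 := fconj_gradient F_cvx Kp1 p1_grad.

Lemma fine_fconj_mix {q : Y -> R} : K q ->
  dotp (fun y => t * gradF p0 y + (1 - t) * gradF p1 y) q - F q
    <= fine (fconj K F (fun y => t * gradF p0 y + (1 - t) * gradF p1 y))
    <= t * (dotp (gradF p0) p0 - F p0) + (1 - t) * (dotp (gradF p1) p1 - F p1).
Proof.
move=> Kq; apply: fine_between; first exact: fenchel_young.
by apply: fconj_mix_le => //; rewrite (fconj_p0, fconj_p1).
Qed.

Lemma fconj_gap_ge0 : 0 <= fconj_gap K F t (gradF p0) (gradF p1).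
Proof.
rewrite /fconj_gap fconj_p0 fconj_p1 /= subr_ge0.
by case/andP: (fine_fconj_mix Kp0).
Qed.

Lemma fconj_gap_le_bregF (q : Y -> R) : K q ->
  fconj_gap K F t (gradF p0) (gradF p1) <=
  t * bregF F gradF q p0 + (1 - t) * bregF F gradF q p1.
Proof.
move=> Kq; rewrite /fconj_gap fconj_p0 fconj_p1 /=.
case/andP: (fine_fconj_mix Kq); rewrite dotp_combl => lower _.
rewrite /bregF !dotpBr.
have -> : t * (F q - F p0 - (dotp (gradF p0) q - dotp (gradF p0) p0))
          + (1 - t) * (F q - F p1 - (dotp (gradF p1) q - dotp (gradF p1) p1)) =
          t * (dotp (gradF p0) p0 - F p0)
          + (1 - t) * (dotp (gradF p1) p1 - F p1)
          - (t * dotp (gradF p0) q + (1 - t) * dotp (gradF p1) q - F q) by ring.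
by rewrite lerD2l lerN2.
Qed.

End Conjugate.

Definition mix_weight {R : realType} {X : finType} (P : X -> R) (Phi : X -> X)
    (x : X) : R :=
  P x / (P x + P (Phi x)).

Section Coherence.
Context {R : realType} {X Y : finType} {P : X -> R} {Phi : X -> X}.
Hypotheses (P_gt0 : forall x, 0 < P x) (Phi_inv : involutive Phi).

Lemma mix_weightC x : 1 - mix_weight P Phi x = mix_weight P Phi (Phi x).
Proof.
by rewrite /mix_weight Phi_inv addrC; field; rewrite gt_eqF // addr_gt0.
Qed.

Lemma mix_weight_ge0 x : 0 <= mix_weight P Phi x.
Proof. by rewrite divr_ge0 // ltW // addr_gt0. Qed.

Lemma mix_weight_le1 x : mix_weight P Phi x <= 1.
Proof. by rewrite -subr_ge0 mix_weightC mix_weight_ge0. Qed.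

Lemma expect_mix_weight (a : X -> R) :
  expect P (fun x =>
    mix_weight P Phi x * a x + (1 - mix_weight P Phi x) * a (Phi x)) =
  expect P a.
Proof.
have -> : expect P a = \sum_x P x * mix_weight P Phi x * a x
                       + \sum_x P x * (1 - mix_weight P Phi x) * a x.
  by rewrite /expect -big_split; apply: eq_bigr => x _ /=; ring.
rewrite [X in _ = _ + X](reindex_inj (inv_inj Phi_inv)) -big_split /=.
apply: eq_bigr => x _; rewrite !mix_weightC Phi_inv /mix_weight Phi_inv.
by field; rewrite gt_eqF // addr_gt0.
Qed.

Context {K : set (Y -> R)} {F : (Y -> R) -> R} {gradF : (Y -> R) -> Y -> R}.

Lemma expect_fconj_gap_le_bregP {q pi0 : X -> Y -> R} :
  convex_on K F -> (forall x, K (pi0 x)) ->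
  (forall x, has_gradient F (pi0 x) (gradF (pi0 x))) ->
  (forall x, K (q x)) -> (forall x, q x = q (Phi x)) ->
  expect P (fun x => fconj_gap K F (mix_weight P Phi x)
                       (gradF (pi0 x)) (gradF (pi0 (Phi x))))
    <= bregP P F gradF q pi0.
Proof.
move=> F_cvx K_pi0 pi0_grad K_q q_coh.
rewrite /bregP -[X in _ <= X]expect_mix_weight.
apply: ler_expect => [x|x]; first exact/ltW.
rewrite -(q_coh x); apply: fconj_gap_le_bregF => //.
by rewrite mix_weight_ge0 mix_weight_le1.
Qed.

End Coherence.

Theorem theorem14 (R : realType) (X Y : finType) (P : X -> R) (Phi : X -> X)
  (Pi : set (X -> Y -> R)) (K : set (Y -> R)) (F : (Y -> R) -> R)
  (gradF : (Y -> R) -> (Y -> R)) (pi0 pistar pibar pihh : X -> Y -> R) :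
  (forall x, 0 < P x) -> \sum_(x : X) P x = 1 ->
  involutive Phi ->
  Pi `<=` @Pi_all R Y X -> closed_family Pi -> convex_family Pi ->
  closed_vset K -> convex_vset K ->
  (forall p, nonneg p -> K p) -> (forall p, strictpos p -> interior_of K p) ->
  legendre K F gradF ->
  @Pi_all R Y X pi0 -> (forall x, interior_of K (pi0 x)) ->
  C_coh Phi pistar -> Pi pistar ->
  is_argmin (C_coh_dag Phi) (fun pi => bregP P F gradF pi pi0) pibar ->
  is_argmin (C_coh Phi `&` Pi) (fun pi => bregP P F gradF pi pibar) pihh ->
  (forall x, interior_of K (pibar x)) -> (forall x, interior_of K (pihh x)) ->
  let lam := fun x => P x / (P x + P (Phi x)) in
  let u0 := fun x => gradF (pi0 x) in
  let u1 := fun x => gradF (pi0 (Phi x)) in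
  let delta := expect P (fun x =>
      lam x * fine (fconj K F (u0 x)) + (1 - lam x) * fine (fconj K F (u1 x))
      - fine (fconj K F (fun y => lam x * u0 x y + (1 - lam x) * u1 x y))) in
  [/\ bregP P F gradF pistar pihh <=
        bregP P F gradF pistar pi0
        - (bregP P F gradF pihh pibar + bregP P F gradF pibar pi0),
      bregP P F gradF pistar pihh <=
        bregP P F gradF pistar pi0 - (bregP P F gradF pihh pibar + delta)
    & 0 <= delta].
Proof.
move=> P_gt0 _ Phi_inv _ _ Pi_cvx _ _ _ _ [_ [_ F_cvx] [F_grad _] _ _] _ pi0_int
  pistar_C pistar_Pi pibar_min pihh_min pibar_int pihh_int lam u0 u1 delta.
have P_ge0 x : 0 <= P x by exact/ltW.
have K_int q : interior_of K q -> K q.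
  by move=> [e e0]; apply => y; rewrite subrr normr0.
have pyth_bar := bregP_pythagoras P_ge0 (convex_family_C_coh_dag Phi)
  pistar_C.1 (fun x => F_grad _ (pibar_int x)) pibar_min.
have pyth_hh := bregP_pythagoras P_ge0
  (convex_familyI (convex_family_C_coh Phi) Pi_cvx) (conj pistar_C pistar_Pi)
  (fun x => F_grad _ (pihh_int x)) pihh_min.
have K_pi0 x : K (pi0 x) := K_int _ (pi0_int x).
have pi0_grad x := F_grad _ (pi0_int x).
have lam01 x : 0 <= lam x <= 1.
  by rewrite /lam -/(mix_weight P Phi x) mix_weight_ge0 // mix_weight_le1.
have delta_ge0 : 0 <= delta.
  apply: expect_ge0 => // x.
  exact: fconj_gap_ge0 F_cvx (lam01 x) (K_pi0 x) (K_pi0 (Phi x))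
    (pi0_grad x) (pi0_grad (Phi x)).
have delta_le : delta <= bregP P F gradF pibar pi0 :=
  expect_fconj_gap_le_bregP P_gt0 Phi_inv F_cvx K_pi0 pi0_grad
    (fun x => K_int _ (pibar_int x)) pibar_min.1.2.
by split => //; lra.
Qed.
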